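(* Assume the standing assumptions and fix a function $h$ satisfying (h1)–(h4). Let $\tau=\min\{n\ge1:S_n\le0\}$. Suppose there is a stopping time $\sigma$ (with respect to an admissible filtration) such that $\mathbf P(\sigma>0)>0$, $\mathbf P(S_\sigma\le0)=1$ and $\lim_{x\to\infty}\delta_\sigma(x)=0$. Then $\lim_{x\to\infty}\delta_\tau(x)=0$.
   Context: Standing assumptions: $\{\xi_n\}_{n\ge1}$ are i.i.d. real random variables with common distribution function $F$ and finite mean $\mathbf E\xi_1=-m<0$. $F$ is long-tailed: $\overline F(x)=1-F(x)>0$ for all $x$, and $\overline F(x-c)/\overline F(x)\to1$ as $x\to\infty$ for every fixed $c>0$. Notation: $S_0=0$ and $S_n=\sum_{i=1}^n\xi_i$. Admissible filtration: stopping times are taken with respect to a filtration $\{\mathcal F_n\}_{n\ge0}$ such that $\xi_n$ is $\mathcal F_n$-measurable and $\xi_{n+1}$ is independent of $\mathcal F_n$. The function $h:\mathbb R_+\to\mathbb R_+$ satisfies: - (h1) $h(x)\le x/2$; - (h2) $h(x)\to\infty$; - (h3) $\overline F(x-h(x))/\overline F(x)\to1$ as $x\to\infty$; - (h4) there exists $x_0$ with $h(x+t)\le h(x)+t$ for all $x\ge x_0$, $t\ge0$. For $x\ge0$, let $\mu(x)=\min\{n:S_n>x\}$, with $\min\emptyset=\infty$. For a stopping time $\sigma$, define $$A_{\sigma,2}(x)=\{\mu(x)\le\sigma,\ S_{\mu(x)-1}>h(x)\},\qquad \delta_\sigma(x)=\sup_{y\ge x}\frac{\mathbf P(A_{\sigma,2}(y))}{\overline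 F(y)}.$$ *)

From HB Require Import structures.
From mathcomp Require Import all_boot all_order all_algebra.
From mathcomp Require Import all_classical all_reals all_analysis.
Set Implicit Arguments. Unset Strict Implicit. Unset Printing Implicit Defensive.
Import Order.TTheory GRing.Theory Num.Theory.
Import numFieldNormedType.Exports.
Local Open Scope classical_set_scope.
Local Open Scope ring_scope.

(* Values in N u {oo}: [Some n] = n, [None] = infinity. *)
Definition le_opt (n : nat) (s : option nat) : Prop :=
  match s with Some m => (n <= m)%N | None => True end.

Definition first_time (p : pred nat) : option nat :=
  match pselect (exists n, p n) with
  | left H => Some (ex_minn H)
  | right _ => None
  end.

Section Walk.
Context {d : measure_display} {T : measurableType d} {R : realType}.

(* xi i is the paper's xi_{i+1}; S n = xi_1 + ... + xi_n, S 0 = 0. *)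
Definition walk (xi : nat -> T -> R) (n : nat) (w : T) : R :=
  \sum_(i < n) xi i w.

Definition Fbar (P : probability T R) (xi : nat -> T -> R) (x : R) : R :=
  fine (P [set w | x < xi 0%N w]).

Definition mu (xi : nat -> T -> R) (x : R) (w : T) : option nat :=
  first_time (fun n => x < walk xi n w).

Definition tau (xi : nat -> T -> R) (w : T) : option nat :=
  first_time (fun n => (0 < n)%N && (walk xi n w <= 0)).

Definition A2 (xi : nat -> T -> R) (h : R -> R) (sigma : T -> option nat)
    (x : R) : set T :=
  [set w | exists n, mu xi x w = Some n /\ le_opt n (sigma w) /\
                     h x < walk xi n.-1 w].

Definition delta (P : probability T R) (xi : nat -> T -> R) (h : R -> R)
    (sigma : T -> option nat) (x : R) : \bar R :=
  ereal_sup [set ((fine (P (A2 xi h sigma y)) / Fbar P xi y)%:E) | y in [set y | x <= y]].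

Definition iid (P : probability T R) (xi : nat -> T -> R) : Prop :=
  (forall i, measurable_fun setT (xi i)) /\
  (forall i (B : set R), measurable B ->
      P (xi i @^-1` B) = P (xi 0%N @^-1` B)) /\
  (forall (n : nat) (B : nat -> set R), (forall i, measurable (B i)) ->
      P (\bigcap_(i in [set i | (i < n)%N]) (xi i @^-1` B i)) =
      (\prod_(i < n) P (xi i @^-1` B i))%E).

Definition negative_finite_mean (P : probability T R) (xi : nat -> T -> R) : Prop :=
  P.-integrable setT (EFin \o xi 0%N) /\ ('E_P[xi 0%N] < 0)%E.

Definition long_tailed (P : probability T R) (xi : nat -> T -> R) : Prop :=
  (forall x, 0 < Fbar P xi x) /\
  (forall c : R, 0 < c ->
     (fun x => Fbar P xi (x - c) / Fbar P xi x) @ +oo --> (1 : R)).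

(* conditions (h1)-(h4) on h : R_+ -> R_+ (only its values on [0,oo) matter) *)
Definition admissible_h (P : probability T R) (xi : nat -> T -> R) (h : R -> R) : Prop :=
  (forall x, 0 <= x -> 0 <= h x) /\
  (forall x, 0 <= x -> h x <= x / 2) /\
  (h @ +oo --> +oo) /\
  ((fun x => Fbar P xi (x - h x) / Fbar P xi x) @ +oo --> (1 : R)) /\
  (exists x0, forall x t, x0 <= x -> 0 <= t -> h (x + t) <= h x + t).

Definition admissible_filtration (P : probability T R) (xi : nat -> T -> R)
    (F : nat -> set (set T)) : Prop :=
  (forall n, sigma_algebra setT (F n)) /\
  (forall n, F n `<=` measurable) /\
  (forall n, F n `<=` F n.+1) /\
  (forall i (B : set R), measurable B -> F i.+1 (xi i @^-1` B)) /\
  (forall n (A : set T) (B : set R), F n A -> measurable B ->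
      P (A `&` xi n @^-1` B) = (P A * P (xi n @^-1` B))%E).

Definition stopping_time (F : nat -> set (set T)) (sigma : T -> option nat) : Prop :=
  forall n, F n [set w | sigma w = Some n].

End Walk.

From HB Require Import structures.
From mathcomp Require Import all_boot all_order all_algebra.
From mathcomp Require Import all_classical all_reals all_analysis.
From mathcomp Require Import ring lra.
Import Order.TTheory GRing.Theory Num.Theory.
Import numFieldNormedType.Exports.
Local Open Scope classical_set_scope.
Local Open Scope ring_scope.

(* Off a null set, either sigma = 0 or S_sigma <= 0 with sigma >= 1; in the
   latter case tau <= sigma, so A_{tau,2}(y) is contained in
   A_{sigma,2}(y) u ({sigma = 0} n A_{tau,2}(y)).  The event {sigma = 0} lies
   in F_0, hence (Dynkin's pi-lambda theorem over the cylinders of xi) it is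
   independent of every event of the walk, in particular of A_{tau,2}(y).
   With p = P(sigma = 0) < 1 this gives
   P(A_{tau,2}(y)) <= P(A_{sigma,2}(y)) / (1 - p), hence
   delta_tau <= delta_sigma / (1 - p) -> 0. *)

Lemma first_timeP (p : pred nat) n :
  first_time p = Some n <-> p n /\ (forall k, (k < n)%N -> ~~ p k).
Proof.
rewrite /first_time; case: pselect => [H|H]; last first.
  by split=> // -[pn _]; exfalso; apply: H; exists n.
case: ex_minnP => m pm minm; split.
  move=> [<-]; split=> // k km; apply/negP => /minm.
  by rewrite leqNgt km.
move=> [pn hn]; congr Some; apply/eqP; rewrite eqn_leq minm //=.
by rewrite leqNgt; apply/negP => /hn; rewrite pm.
Qed.

Lemma le_opt_first_time (p : pred nat) n :
  le_opt n (first_time p) <-> (forall k, (k < n)%N -> ~~ p k).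
Proof.
case E: (first_time p) => [m|] /=.
  move/first_timeP: E => [pm hm]; split.
    by move=> nm k kn; apply: hm; exact: leq_trans kn nm.
  by move=> hk; rewrite leqNgt; apply/negP => /hk; rewrite pm.
split=> // _ k _; apply/negP => pk.
by move: E; rewrite /first_time; case: pselect => // H _; apply: H; exists k.
Qed.

Section WalkEvents.
Context {d : measure_display} {T : measurableType d} {R : realType}.
Variable xi : nat -> T -> R.

Lemma muP y w n : mu xi y w = Some n <->
  y < walk xi n w /\ (forall k, (k < n)%N -> walk xi k w <= y).
Proof.
rewrite /mu first_timeP.
by split=> -[a b]; split=> // k /b; rewrite -leNgt.
Qed.

Lemma le_opt_tau n w : le_opt n (tau xi w) <->
  (forall k, (0 < k)%N -> (k < n)%N -> 0 < walk xi k w).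
Proof.
rewrite /tau le_opt_first_time; split=> H k.
  by move=> k0 kn; have := H k kn; rewrite k0 /= -ltNge.
by case: k => [//|k] kn; rewrite /= -ltNge; exact: H.
Qed.

Lemma A2E h s y : A2 xi h s y = \bigcup_n
  ([set w | y < walk xi n w] `&`
   \bigcap_(k in [set k | (k < n)%N]) [set w | walk xi k w <= y] `&`
   [set w | le_opt n (s w)] `&` [set w | h y < walk xi n.-1 w]).
Proof.
apply/seteqP; split=> w /=.
  by move=> [n [/muP[? ?] [? ?]]]; exists n.
move=> [n _ [[[H1 H2] H3] H4]]; exists n; split=> //.
by apply/muP; split=> // k kn; exact: H2.
Qed.

Lemma le_optE (s : T -> option nat) n :
  [set w | le_opt n (s w)] =
  ~` \bigcup_(k in [set k | (k < n)%N]) [set w | s w = Some k].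
Proof.
apply/seteqP; split=> w /=; case E: (s w) => [m|] //=.
- by move=> nm [k /= kn]; rewrite E => -[mk]; move: kn; rewrite -mk ltnNge nm.
- by move=> _ [k _ /=]; rewrite E.
- by move=> H; rewrite leqNgt; apply/negP => mn; apply: H; exists m.
Qed.

Lemma le_opt_tauE n : [set w | le_opt n (tau xi w)] =
  \bigcap_(k in [set k | (0 < k)%N && (k < n)%N]) [set w | 0 < walk xi k w].
Proof.
apply/seteqP; split=> w /=.
  by move=> /le_opt_tau H k /andP[k0 kn]; exact: H.
by move=> H; apply/le_opt_tau => k k0 kn; apply: H; rewrite /= k0 kn.
Qed.

Lemma A2_le_opt_sub h s1 s2 y w :
  (forall n, le_opt n (s1 w) -> le_opt n (s2 w)) ->
  A2 xi h s1 y w -> A2 xi h s2 y w.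
Proof. by move=> s12 [n [? [/s12 ? ?]]]; exists n. Qed.

Lemma tau_le_nonpos_time n m w :
  walk xi m.+1 w <= 0 -> le_opt n (tau xi w) -> (n <= m.+1)%N.
Proof.
move=> Sm /le_opt_tau tau_n; rewrite leqNgt; apply/negP => /(tau_n m.+1 (ltn0Sn m)).
by rewrite ltNge Sm.
Qed.

Lemma A2_tau_sub_stopped h s y :
  A2 xi h (tau xi) y `<=`
  A2 xi h s y `|` ([set w | s w = Some 0%N] `&` A2 xi h (tau xi) y) `|`
  ~` [set w | exists n, s w = Some n /\ walk xi n w <= 0].
Proof.
move=> w Aw.
have [[[|m] [sm Sm]]|] := pselect (exists n, s w = Some n /\ walk xi n w <= 0).
- by left; right.
- left; left; apply: A2_le_opt_sub Aw => n; rewrite sm.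
  exact: tau_le_nonpos_time.
- by right.
Qed.

Hypothesis mxi : forall i, measurable_fun setT (xi i).

Lemma measurable_walk n : measurable_fun setT (walk xi n).
Proof. exact: measurable_sum. Qed.

Lemma measurable_walk_gt n a : measurable [set w | a < walk xi n w].
Proof.
have := measurable_walk n measurableT _ (measurable_itv `]a, +oo[).
by rewrite setTI; congr measurable; apply/seteqP; split=> w /=; rewrite in_itv /= andbT.
Qed.

Lemma measurable_walk_le n a : measurable [set w | walk xi n w <= a].
Proof.
have := measurable_walk n measurableT _ (measurable_itv `]-oo, a]).
by rewrite setTI; congr measurable; apply/seteqP; split=> w /=; rewrite in_itv.
Qed.

Lemma measurable_A2 h s y : (forall n, measurable [set w | le_opt n (s w)]) ->
  measurable (A2 xi h s y).
Proof.
move=> ms; rewrite A2E; apply: bigcupT_measurable => n.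
apply: measurableI; last exact: measurable_walk_gt.
apply: measurableI; last exact: ms.
apply: measurableI; first exact: measurable_walk_gt.
by apply: bigcap_measurableType => k _; exact: measurable_walk_le.
Qed.

Lemma measurable_A2_tau h y : measurable (A2 xi h (tau xi) y).
Proof.
apply: measurable_A2 => n; rewrite le_opt_tauE.
by apply: bigcap_measurableType => k _; exact: measurable_walk_gt.
Qed.

End WalkEvents.

Section FiltrationIndependence.
Context {d : measure_display} {T : measurableType d} {R : realType}.
Variables (P : probability T R) (xi : nat -> T -> R) (F : nat -> set (set T)).
Hypothesis HF : admissible_filtration P xi F.

Lemma sigma_algebra_setI {M : set (set T)} {A B : set T} :
  sigma_algebra setT M -> M A -> M B -> M (A `&` B).
Proof.
move=> sM; rewrite -(measurable_g_measurableTypeE sM) => MA MB.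
exact: (@measurableI _ (g_sigma_algebraType M)).
Qed.

Lemma filtration_sub m n : (m <= n)%N -> F m `<=` F n.
Proof.
have [_ [_ [FS _]]] := HF.
elim: n => [|n IH]; first by rewrite leqn0 => /eqP ->.
by rewrite leq_eqVlt => /orP[/eqP -> //|/IH]; move/subset_trans; apply.
Qed.

Lemma filtration_measurable_xi i : measurable_fun setT (xi i).
Proof.
have [_ [FM [_ [Fxi _]]]] := HF.
by move=> _ B mB; rewrite setTI; apply: FM; exact: Fxi.
Qed.

Lemma filtration_setT n : F n setT.
Proof. by have [F0 FC _] := HF.1 n; rewrite -(setD0 setT); exact: FC. Qed.

Definition cylinder n (B : nat -> set R) : set T :=
  \bigcap_(i in [set i | (i < n)%N]) (xi i @^-1` B i).

Definition cylinders : set (set T) :=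
  [set E | exists n B, (forall i, measurable (B i)) /\ E = cylinder n B].

Lemma cylinder0 B : cylinder 0 B = setT.
Proof. by apply/seteqP; split=> w. Qed.

Lemma cylinderS n B : cylinder n.+1 B = cylinder n B `&` xi n @^-1` B n.
Proof.
apply/seteqP; split=> w /=.
  by move=> H; split=> [i /= /ltnW|]; apply: H => /=.
by move=> [H1 H2] i /=; rewrite ltnS leq_eqVlt => /orP[/eqP -> //|/H1].
Qed.

Lemma filtration_cylinder n B : (forall i, measurable (B i)) -> F n (cylinder n B).
Proof.
have [Fs [_ [_ [Fxi _]]]] := HF.
move=> mB; elim: n => [|n IH].
  by rewrite cylinder0; exact: filtration_setT.
rewrite cylinderS; apply: (sigma_algebra_setI (Fs n.+1)); last exact: Fxi.
exact: filtration_sub (leqnSn n) _ IH.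
Qed.

Lemma filtration0_indep_cylinder_prod A n B : F 0 A -> (forall i, measurable (B i)) ->
  P (A `&` cylinder n B) = (P A * \prod_(i < n) P (xi i @^-1` B i))%E.
Proof.
have [Fs [_ [_ [_ Find]]]] := HF.
move=> FA mB; elim: n => [|n IH]; first by rewrite cylinder0 setIT big_ord0 mule1.
rewrite cylinderS setIA Find //; last first.
  apply: (sigma_algebra_setI (Fs n)); last exact: filtration_cylinder.
  exact: filtration_sub (leq0n n) _ FA.
by rewrite IH big_ord_recr /= muleA.
Qed.

Lemma filtration0_indep_cylinder A n B : F 0 A -> (forall i, measurable (B i)) ->
  P (A `&` cylinder n B) = (P A * P (cylinder n B))%E.
Proof.
move=> FA mB; rewrite filtration0_indep_cylinder_prod //.
rewrite -[in RHS](setTI (cylinder n B)) filtration0_indep_cylinder_prod //.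
  by rewrite probability_setT mul1e.
exact: filtration_setT.
Qed.

Lemma cylinders_setI_closed : setI_closed cylinders.
Proof.
move=> _ _ [n [B [mB ->]]] [m [B' [mB' ->]]].
exists (maxn n m), (fun i => (if (i < n)%N then B i else setT) `&`
                          (if (i < m)%N then B' i else setT)); split.
  by move=> i; apply: measurableI; case: ifP.
apply/seteqP; split=> w /=.
  by move=> [H1 H2] i _; split; case: ifP => // iln; [exact: H1|exact: H2].
move=> H; split=> i /= ilt.
  by have := H i (leq_trans ilt (leq_maxl n m)); rewrite ilt => -[].
by have := H i (leq_trans ilt (leq_maxr n m)); rewrite ilt => -[].
Qed.

Lemma cylinders_preimage_xi i B : measurable B -> cylinders (xi i @^-1` B).
Proof.
move=> mB; exists i.+1, (fun j => if j == i then B else setT); split.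
  by move=> j; case: eqP.
apply/seteqP; split=> w /=.
  by move=> Hw j _; case: eqP => [->|].
by move=> /(_ i (ltnSn i)); rewrite eqxx.
Qed.

Lemma cylinders_measurable : cylinders `<=` measurable.
Proof.
move=> _ [n [B [mB ->]]]; apply: bigcap_measurableType => i _.
by have := filtration_measurable_xi i measurableT _ (mB i); rewrite setTI.
Qed.

(* Viewing xi on the sigma-algebra generated by the cylinders lets the
   measurability lemmas on walk events show that they belong to it. *)
Lemma cylinders_measurable_xi i :
  measurable_fun [set: g_sigma_algebraType cylinders]
    (xi i : g_sigma_algebraType cylinders -> R).
Proof.
by move=> _ B mB; rewrite setTI; apply: sub_sigma_algebra; exact: cylinders_preimage_xi.
Qed.

Definition independent_of (A : set T) : set (set T) :=
  [set E | measurable E /\ P (A `&` E) = (P A * P E)%E].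

Lemma independent_of_dynkin A : measurable A -> dynkin (independent_of A).
Proof.
have fin E : measurable E -> P E = (fine (P E))%:E.
  by move=> mE; rewrite fineK // fin_num_measure.
move=> mA; split.
- by split=> //; rewrite setIT probability_setT mule1.
- move=> E [mE HE]; split; first exact: measurableC.
  rewrite -setDE measureD //; last by rewrite ltey_eq fin_num_measure.
  rewrite (_ : P A - _ = P A - P A * P E)%E; last by congr (_ - _)%E.
  rewrite probability_setC // (fin _ mA) (fin _ mE).
  by rewrite -EFinM -EFinB -EFinB -EFinM; congr EFin; ring.
- move=> G tG HG; have mG k : measurable (G k) by have [] := HG k.
  split; first exact: bigcupT_measurable.
  rewrite setI_bigcupr measure_bigcup //; last first.
    - by apply: trivIset_setIl.
    - by move=> k _; apply: measurableI.
  rewrite measure_bigcup // (fin _ mA) -nneseriesZl //.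
  by apply: eq_eseriesr => k _; rewrite -(fin _ mA); exact: (HG k).2.
Qed.

Lemma filtration0_indep_walk A E : F 0 A -> <<s cylinders >> E ->
  P (A `&` E) = (P A * P E)%E.
Proof.
move=> FA; have mA : measurable A := HF.2.1 0%N A FA.
suff : <<s cylinders >> `<=` independent_of A by move=> /[apply] -[].
have lA : lambda_system setT (independent_of A).
  exact/dynkin_lambda_system/independent_of_dynkin.
apply: (lambda_system_subset cylinders_setI_closed lA) => //.
move=> _ [n [B [mB ->]]]; split; last exact: filtration0_indep_cylinder.
by apply: cylinders_measurable; exists n, B.
Qed.

End FiltrationIndependence.

Arguments filtration_measurable_xi {d T R P xi F}.
Arguments filtration0_indep_walk {d T R P xi F} HF {A E}.

Section StoppedWalk.
Context {d : measure_display} {T : measurableType d} {R : realType}.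
Variables (P : probability T R) (xi : nat -> T -> R) (F : nat -> set (set T)).
Variables (h : R -> R) (s : T -> option nat).
Hypothesis HF : admissible_filtration P xi F.
Hypothesis Hs : stopping_time F s.

Lemma measurable_stop_eq n : measurable [set w | s w = Some n].
Proof. exact: HF.2.1 _ _ (Hs n). Qed.

Lemma measurable_A2_stop y : measurable (A2 xi h s y).
Proof.
apply: measurable_A2 => [|n]; first exact: filtration_measurable_xi HF.
rewrite le_optE; apply/measurableC.
by apply: bigcup_measurable => k _; exact: measurable_stop_eq.
Qed.

Lemma measurable_stopped_nonpos :
  measurable [set w | exists n, s w = Some n /\ walk xi n w <= 0].
Proof.
rewrite (_ : [set w | _] =
  \bigcup_n ([set w | s w = Some n] `&` [set w | walk xi n w <= 0])).
  apply: bigcupT_measurable => n.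
  apply: measurableI; first exact: measurable_stop_eq.
  exact: measurable_walk_le (filtration_measurable_xi HF) _ _.
by apply/seteqP; split=> w /= [n]; exists n.
Qed.

Lemma stop0_indep_A2_tau y :
  P ([set w | s w = Some 0%N] `&` A2 xi h (tau xi) y) =
  (P [set w | s w = Some 0%N] * P (A2 xi h (tau xi) y))%E.
Proof.
apply: (filtration0_indep_walk HF (Hs 0%N)).
exact: (@measurable_A2_tau _ (g_sigma_algebraType (cylinders xi)) _ xi
  (cylinders_measurable_xi xi)).
Qed.

Lemma prob_A2_tau_le y :
  P [set w | exists n, s w = Some n /\ walk xi n w <= 0] = 1%E ->
  (P (A2 xi h (tau xi) y) <=
   P (A2 xi h s y) + P [set w | s w = Some 0%N] * P (A2 xi h (tau xi) y))%E.
Proof.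
move=> stopped_nonpos; rewrite -stop0_indep_A2_tau.
have PN0 : P (~` [set w | exists n, s w = Some n /\ walk xi n w <= 0]) = 0.
  by rewrite probability_setC ?stopped_nonpos ?subee //; exact: measurable_stopped_nonpos.
set N := ~` _ in PN0; set Z := [set w | s w = Some 0%N].
have mAt := measurable_A2_tau xi (filtration_measurable_xi HF) h y.
have mAs := measurable_A2_stop y.
have mZAt : measurable (Z `&` A2 xi h (tau xi) y).
  exact: measurableI (measurable_stop_eq 0) mAt.
have mN : measurable N by exact/measurableC/measurable_stopped_nonpos.
have sub : (P (A2 xi h (tau xi) y) <=
            P (A2 xi h s y `|` (Z `&` A2 xi h (tau xi) y) `|` N))%E.
  apply: le_measure; rewrite ?inE //; last exact: A2_tau_sub_stopped.
  by apply: measurableU => //; exact: measurableU.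
apply: le_trans sub _; rewrite measureU0 //; last exact: measurableU.
exact: measureU2.
Qed.

Lemma prob_stop_eq0_lt1 : (0 < P [set w | s w <> Some 0%N])%E ->
  fine (P [set w | s w = Some 0%N]) < 1.
Proof.
have mZ := measurable_stop_eq 0.
rewrite (_ : [set w | s w <> Some 0%N] = ~` [set w | s w = Some 0%N]) //.
by rewrite probability_setC // -(fineK (fin_num_measure _ _ mZ)) -EFinB lte_fin subr_gt0.
Qed.

Lemma prob_A2_tau_le_scaled y :
  P [set w | exists n, s w = Some n /\ walk xi n w <= 0] = 1%E ->
  fine (P [set w | s w = Some 0%N]) < 1 ->
  fine (P (A2 xi h (tau xi) y)) <=
  (1 - fine (P [set w | s w = Some 0%N]))^-1 * fine (P (A2 xi h s y)).
Proof.
move=> /(prob_A2_tau_le y) + p_lt1.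
have fin A : measurable A -> P A = (fine (P A))%:E.
  by move=> mA; rewrite fineK // fin_num_measure.
rewrite (fin _ (measurable_A2_tau xi (filtration_measurable_xi HF) h y)).
rewrite (fin _ (measurable_A2_stop y)) (fin _ (measurable_stop_eq 0)).
rewrite -EFinM -EFinD lee_fin => le_At; rewrite ler_pdivlMl ?subr_gt0 //.
lra.
Qed.

End StoppedWalk.

Arguments prob_stop_eq0_lt1 {d T R P xi F s}.
Arguments prob_A2_tau_le_scaled {d T R P xi F h s}.

Section DeltaBound.
Context {d : measure_display} {T : measurableType d} {R : realType}.
Variables (P : probability T R) (xi : nat -> T -> R) (h : R -> R).
Hypothesis Fbar_gt0 : forall x, 0 < Fbar P xi x.

Lemma delta_ge0 s x : (0 <= delta P xi h s x)%E.
Proof.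
apply: le_trans (ereal_sup_ubound _); last by exists x => /=.
by rewrite lee_fin divr_ge0 ?fine_ge0 ?measure_ge0 // ltW.
Qed.

Lemma delta_le_scaled s1 s2 c x : 0 <= c ->
  (forall y, fine (P (A2 xi h s1 y)) <= c * fine (P (A2 xi h s2 y))) ->
  (delta P xi h s1 x <= delta P xi h s2 x * c%:E)%E.
Proof.
move=> c_ge0 le12; apply: ge_ereal_sup => _ [y /= xy <-].
have le_sup : ((fine (P (A2 xi h s2 y)) / Fbar P xi y)%:E <= delta P xi h s2 x)%E.
  by apply: ereal_sup_ubound; exists y.
apply: le_trans (lee_wpmul2r _ le_sup); last by rewrite lee_fin.
rewrite -EFinM lee_fin mulrAC ler_wpM2r ?invr_ge0 ?(ltW (Fbar_gt0 y)) //.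
by rewrite mulrC.
Qed.

End DeltaBound.

Theorem lemma4 (d : measure_display) (T : measurableType d) (R : realType)
  (P : probability T R) (xi : nat -> T -> R) (h : R -> R) :
  iid P xi -> negative_finite_mean P xi -> long_tailed P xi ->
  admissible_h P xi h ->
  (exists (F : nat -> set (set T)) (sigma : T -> option nat),
     [/\ admissible_filtration P xi F, stopping_time F sigma,
         (0 < P [set w | sigma w <> Some 0%N])%E,
         P [set w | exists n, sigma w = Some n /\ walk xi n w <= 0] = 1%E &
         delta P xi h sigma x @[x --> +oo] --> 0%E]) ->
  delta P xi h (tau xi) x @[x --> +oo] --> 0%E.
Proof.
(* Neither the i.i.d., mean and tail assumptions nor (h1)-(h4) are needed:
   beyond the filtration, only Fbar > 0 is used. *)
move=> _ _ [Fbar_gt0 _] _ [F [s [HF Hs s_pos stopped_nonpos delta_s]]].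
have p_lt1 := prob_stop_eq0_lt1 HF Hs s_pos.
set c := (1 - fine (P [set w | s w = Some 0%N]))^-1.
have c_ge0 : 0 <= c by rewrite invr_ge0 subr_ge0 ltW.
apply: (@squeeze_cvge _ _ _ _ (fun=> 0%E) _ (fun x => delta P xi h s x * c%:E)%E).
- apply: nearW => x; rewrite delta_ge0 //=.
  apply: delta_le_scaled => // y.
  exact: prob_A2_tau_le_scaled HF Hs y stopped_nonpos p_lt1.
- exact: cvg_cst.
- by have := cvgeZr (y := c%:E) (fin_numE _) delta_s; rewrite mul0e.
Qed.
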